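(* Let $m>1$, $N\ge2$, $\chi>C_N$, and let $X_0\in\mathcal R^N$ satisfy $\mathcal F^N_m(X_0)<0$. Then the maximal solution $X$ in $\mathcal R^N$ of the gradient flow system with $X(0)=X_0$ blows up in finite time; in particular its maximal time of existence is finite.
   Context: $\mathcal R^N=\{X\in\mathbb R^N: X_1<\dots<X_N,\ \sum_iX_i=0\}$. $\mathcal F^N_m(X)=\frac1{m-1}\sum_{i=1}^{N-1}(X_{i+1}-X_i)^{1-m}-\frac{\chi}{m-1}\sum_{1\le i\ne j\le N}|X_i-X_j|^{1-m}$. $C_N$ is defined by $\frac1{C_N}=\max_{X\in\mathcal R^N}\frac{\sum_{1\le i\ne j\le N}|X_j-X_i|^{1-m}}{\sum_{i=1}^{N-1}(X_{i+1}-X_i)^{1-m}}$. Gradient flow system: for $i=1,\dots,N$, $\dot X_i=-(X_{i+1}-X_i)^{-m}+(X_i-X_{i-1})^{-m}+2\chi\sum_{j\ne i}\mathrm{sign}(j-i)|X_j-X_i|^{-m}$, the first term absent for $i=N$ and the second for $i=1$ (i.e. $\dot X=-\nabla\mathcal F^N_m(X)$). Blow-up in finite time: the maximal existence time $T$ is finite and there exist $i_0$ and $t_n\to T$ with $X_{i_0+1}(t_n)-X_{i_0}(t_n)\to0$. *)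

From Stdlib Require Import Reals Lra List.
From Coquelicot Require Import Coquelicot.
Open Scope R_scope.

(* Points of R^N are represented by x : nat -> R, using only the
   coordinates x 0, ..., x (N-1) (paper's X_1,...,X_N shifted by one). *)

Definition rsum (n : nat) (f : nat -> R) : R :=
  fold_right Rplus 0 (map f (seq 0 n)).

Definition rsum_neq (n : nat) (f : nat -> nat -> R) : R :=
  rsum n (fun i => rsum n (fun j => if Nat.eqb i j then 0 else f i j)).

Definition inRN (N : nat) (x : nat -> R) : Prop :=
  (forall i : nat, (i + 1 < N)%nat -> x i < x (i + 1)%nat) /\ rsum N x = 0.

Definition gap_sum (N : nat) (m : R) (x : nat -> R) : R :=
  rsum (N - 1) (fun i => Rpower (x (i + 1)%nat - x i) (1 - m)).

Definition pair_sum (N : nat) (m : R) (x : nat -> R) : R :=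
  rsum_neq N (fun i j => Rpower (Rabs (x i - x j)) (1 - m)).

Definition FNm (N : nat) (m chi : R) (x : nat -> R) : R :=
  / (m - 1) * gap_sum N m x - chi / (m - 1) * pair_sum N m x.

Definition is_CN (N : nat) (m c : R) : Prop :=
  c > 0 /\
  (exists x, inRN N x /\ pair_sum N m x / gap_sum N m x = / c) /\
  (forall x, inRN N x -> pair_sum N m x / gap_sum N m x <= / c).

Definition sgn_nat (i j : nat) : R :=
  if Nat.ltb i j then 1 else if Nat.ltb j i then -1 else 0.

Definition flow_rhs (N : nat) (m chi : R) (x : nat -> R) (i : nat) : R :=
  (if Nat.ltb (i + 1) N then - Rpower (x (i + 1)%nat - x i) (- m) else 0)
  + (match i with O => 0 | S k => Rpower (x i - x k) (- m) end)
  + 2 * chi * rsum N (fun j => if Nat.eqb j i then 0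
                               else sgn_nat i j * Rpower (Rabs (x j - x i)) (- m)).

Definition is_solution (N : nat) (m chi : R) (X0 : nat -> R)
    (T : Rbar) (X : R -> nat -> R) : Prop :=
  Rbar_lt 0 T /\
  (forall i, (i < N)%nat -> X 0 i = X0 i) /\
  (forall t, 0 <= t -> Rbar_lt t T -> inRN N (X t)) /\
  (forall i, (i < N)%nat ->
     filterlim (fun s => X s i) (at_right 0) (locally (X0 i))) /\
  (forall t i, 0 < t -> Rbar_lt t T -> (i < N)%nat ->
     is_derive (fun s => X s i) t (flow_rhs N m chi (X t) i)).

Definition is_maximal_solution (N : nat) (m chi : R) (X0 : nat -> R)
    (T : Rbar) (X : R -> nat -> R) : Prop :=
  is_solution N m chi X0 T X /\
  ~ (exists (T' : Rbar) (Y : R -> nat -> R),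
        Rbar_lt T T' /\ is_solution N m chi X0 T' Y /\
        (forall t i, 0 <= t -> Rbar_lt t T -> (i < N)%nat -> Y t i = X t i)).

Definition blows_up_finite_time (N : nat) (T : Rbar) (X : R -> nat -> R) : Prop :=
  exists T0 : R, T = Finite T0 /\
  exists (i0 : nat) (tn : nat -> R),
    (i0 + 1 < N)%nat /\
    (forall n, 0 <= tn n < T0) /\
    is_lim_seq tn T0 /\
    is_lim_seq (fun n => X (tn n) (i0 + 1)%nat - X (tn n) i0) 0.

From Stdlib Require Import Reals Lra Lia List Classical ClassicalEpsilon.
From Coquelicot Require Import Coquelicot.
Open Scope R_scope.

(* Along the flow the energy [FNm] is nonincreasing, since the flow is its
   gradient flow, and since [FNm] is homogeneous of degree [1 - m], Euler's
   identity gives [d/dt |X|^2 = 2 (m - 1) FNm (X) <= 2 (m - 1) FNm (X s0) < 0]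
   after any time [s0] at which the energy is negative.  As [|X|^2 >= 0], the
   existence time [T] is finite.  If no gap [X_(i+1) - X_i] tended to [0] along
   a sequence [t_n -> T], all gaps would stay above some [delta > 0] near [T];
   there the vector field is bounded and Lipschitz, so Picard iteration started
   shortly before [T] continues the solution beyond [T], against maximality. *)

(** * Finite sums *)

Lemma rsum_S n f : rsum (S n) f = rsum n f + f n.
Proof.
  unfold rsum. rewrite seq_S, map_app, fold_right_app. simpl.
  induction (map f (seq 0 n)); simpl; lra.
Qed.

Lemma rsum_Sl n f : rsum (S n) f = f 0%nat + rsum n (fun i => f (S i)).
Proof. unfold rsum. simpl. rewrite <- seq_shift, map_map. reflexivity. Qed.

Lemma rsum_ext n f g : (forall i, (i < n)%nat -> f i = g i) -> rsum n f = rsum n g.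
Proof.
  induction n as [|n IH]; intros H; [reflexivity|].
  rewrite !rsum_S, IH, (H n) by (lia || (intros; apply H; lia)); reflexivity.
Qed.

Lemma rsum_plus n f g : rsum n (fun i => f i + g i) = rsum n f + rsum n g.
Proof. induction n as [|n IH]; [unfold rsum; simpl; lra|]. rewrite !rsum_S, IH. lra. Qed.

Lemma rsum_scal n c f : rsum n (fun i => c * f i) = c * rsum n f.
Proof. induction n as [|n IH]; [unfold rsum; simpl; lra|]. rewrite !rsum_S, IH. lra. Qed.

Lemma rsum_opp n f : rsum n (fun i => - f i) = - rsum n f.
Proof. induction n as [|n IH]; [unfold rsum; simpl; lra|]. rewrite !rsum_S, IH. lra. Qed.

Lemma rsum_minus n f g : rsum n (fun i => f i - g i) = rsum n f - rsum n g.
Proof. induction n as [|n IH]; [unfold rsum; simpl; lra|]. rewrite !rsum_S, IH. lra. Qed.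

Lemma rsum_zero n f : (forall i, (i < n)%nat -> f i = 0) -> rsum n f = 0.
Proof.
  induction n as [|n IH]; intros H; [reflexivity|].
  rewrite rsum_S, IH, (H n) by (lia || (intros; apply H; lia)); lra.
Qed.

Lemma rsum_comm n k f :
  rsum n (fun i => rsum k (fun j => f i j)) = rsum k (fun j => rsum n (fun i => f i j)).
Proof.
  induction n as [|n IH].
  - symmetry. apply rsum_zero. reflexivity.
  - rewrite rsum_S, IH, <- rsum_plus. apply rsum_ext. intros. rewrite rsum_S. reflexivity.
Qed.

Lemma rsum_le n f g : (forall i, (i < n)%nat -> f i <= g i) -> rsum n f <= rsum n g.
Proof.
  induction n as [|n IH]; intros H; [unfold rsum; simpl; lra|]. rewrite !rsum_S.
  specialize (IH (fun i Hi => H i ltac:(lia))). specialize (H n ltac:(lia)). lra.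
Qed.

Lemma rsum_nonneg n f : (forall i, (i < n)%nat -> 0 <= f i) -> 0 <= rsum n f.
Proof. intros H. rewrite <- (rsum_zero n (fun _ => 0)) by reflexivity. now apply rsum_le. Qed.

Lemma Rabs_rsum_le n f B : (forall i, (i < n)%nat -> Rabs (f i) <= B) ->
  Rabs (rsum n f) <= INR n * B.
Proof.
  induction n as [|n IH]; intros H.
  - unfold rsum; simpl. rewrite Rabs_R0. lra.
  - rewrite rsum_S, S_INR. specialize (IH (fun i Hi => H i ltac:(lia))).
    specialize (H n ltac:(lia)). pose proof (Rabs_triang (rsum n f) (f n)). lra.
Qed.

Lemma is_derive_rsum n (g : nat -> R -> R) (dg : nat -> R) t :
  (forall i, (i < n)%nat -> is_derive (g i) t (dg i)) ->
  is_derive (fun s => rsum n (fun i => g i s)) t (rsum n dg).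
Proof.
  induction n as [|n IH]; intros H.
  - exact (is_derive_const (V:=R_NormedModule) 0 t).
  - rewrite rsum_S. apply (is_derive_ext (fun s => rsum n (fun i => g i s) + g n s)).
    { intros; rewrite rsum_S; reflexivity. }
    apply (is_derive_plus (fun s => rsum n (fun i => g i s)) (g n)).
    + apply IH. intros; apply H; lia.
    + apply H; lia.
Qed.

Lemma filterlim_rsum {T} (F : (T -> Prop) -> Prop) {FF : Filter F} n
    (g : nat -> T -> R) (l : nat -> R) :
  (forall i, (i < n)%nat -> filterlim (g i) F (locally (l i))) ->
  filterlim (fun s => rsum n (fun i => g i s)) F (locally (rsum n l)).
Proof.
  induction n as [|n IH]; intros H.
  - apply filterlim_const.
  - rewrite rsum_S. apply (filterlim_ext (fun s => rsum n (fun i => g i s) + g n s)).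
    { intros; rewrite rsum_S; reflexivity. }
    eapply filterlim_comp_2; [apply IH; intros; apply H; lia | apply H; lia |].
    exact (filterlim_plus (K:=R_AbsRing) (V:=R_NormedModule) (rsum n l) (l n)).
Qed.
(** * Configurations and forces *)

Definition ordered (N : nat) (x : nat -> R) : Prop :=
  forall i, (i + 1 < N)%nat -> x i < x (i + 1)%nat.

Definition separated (N : nat) (d : R) (x : nat -> R) : Prop :=
  forall i, (i + 1 < N)%nat -> d <= x (i + 1)%nat - x i.

Lemma ordered_lt N x i j : ordered N x -> (i < j)%nat -> (j < N)%nat -> x i < x j.
Proof.
  intros Hx. induction j as [|j IH]; intros Hij HjN; [lia|].
  specialize (Hx j ltac:(lia)). rewrite Nat.add_1_r in Hx.
  destruct (Nat.eq_dec i j) as [->|Hne]; [lra|].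
  specialize (IH ltac:(lia) ltac:(lia)). lra.
Qed.

Lemma ordered_sub_neq0 N x i j : ordered N x -> i <> j -> (i < N)%nat -> (j < N)%nat ->
  x i - x j <> 0.
Proof.
  intros Hx Hij Hi Hj. destruct (Nat.lt_gt_cases i j) as [[H|H] _]; [lia| |].
  - pose proof (ordered_lt N x i j Hx H Hj). lra.
  - pose proof (ordered_lt N x j i Hx H Hi). lra.
Qed.

Lemma sign_sub_ordered N x i j : ordered N x -> i <> j -> (i < N)%nat -> (j < N)%nat ->
  sign (x i - x j) = sgn_nat j i.
Proof.
  intros Hx Hij Hi Hj. unfold sgn_nat.
  destruct (Nat.lt_gt_cases i j) as [[H|H] _]; [lia| |].
  - rewrite sign_eq_m1 by (pose proof (ordered_lt N x i j Hx H Hj); lra).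
    rewrite (proj2 (Nat.ltb_ge j i)), (proj2 (Nat.ltb_lt i j)) by lia. reflexivity.
  - rewrite sign_eq_1 by (pose proof (ordered_lt N x j i Hx H Hi); lra).
    rewrite (proj2 (Nat.ltb_lt j i)) by lia. reflexivity.
Qed.

Lemma separated_le N d x i j : 0 <= d -> separated N d x ->
  (i < j)%nat -> (j < N)%nat -> d <= x j - x i.
Proof.
  intros Hd Hx. induction j as [|j IH]; intros Hij HjN; [lia|].
  specialize (Hx j ltac:(lia)). rewrite Nat.add_1_r in Hx.
  destruct (Nat.eq_dec i j) as [->|Hne]; [lra|].
  specialize (IH ltac:(lia) ltac:(lia)). lra.
Qed.

Lemma separated_Rabs N d x i j : 0 <= d -> separated N d x -> i <> j ->
  (i < N)%nat -> (j < N)%nat -> d <= Rabs (x j - x i).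
Proof.
  intros Hd Hx Hij Hi Hj. destruct (Nat.lt_gt_cases i j) as [[H|H] _]; [lia| |].
  - pose proof (separated_le N d x i j Hd Hx H Hj). rewrite Rabs_pos_eq; lra.
  - pose proof (separated_le N d x j i Hd Hx H Hi). rewrite Rabs_left1; lra.
Qed.

Lemma separated_ordered N d x : 0 < d -> separated N d x -> ordered N x.
Proof. intros Hd Hx i Hi. specialize (Hx i Hi). lra. Qed.

Lemma separated_weaken N d d' x : d' <= d -> separated N d x -> separated N d' x.
Proof. intros H Hx i Hi. specialize (Hx i Hi). lra. Qed.

Definition gap_force (N : nat) (m : R) (x : nat -> R) (i : nat) : R :=
  (if Nat.ltb (i + 1) N then - Rpower (x (i + 1)%nat - x i) (- m) else 0)
  + (match i with O => 0 | S k => Rpower (x i - x k) (- m) end).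

Definition pair_force (N : nat) (m : R) (x : nat -> R) (i : nat) : R :=
  rsum N (fun j => if Nat.eqb j i then 0 else sgn_nat i j * Rpower (Rabs (x j - x i)) (- m)).

Lemma flow_rhsE N m chi x i :
  flow_rhs N m chi x i = gap_force N m x i + 2 * chi * pair_force N m x i.
Proof. reflexivity. Qed.

(* [gap_sum_dir N m x v] and [pair_sum_dir N m x v] are the derivatives of
   [gap_sum] and [pair_sum] at [x] in the direction [v], divided by [1 - m]. *)
Definition gap_sum_dir (N : nat) (m : R) (x v : nat -> R) : R :=
  rsum (N - 1) (fun k => Rpower (x (k + 1)%nat - x k) (- m) * (v (k + 1)%nat - v k)).

Definition pair_sum_dir (N : nat) (m : R) (x v : nat -> R) : R :=
  rsum_neq N (fun i j => sgn_nat j i * Rpower (Rabs (x i - x j)) (- m) * (v i - v j)).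

Lemma sgn_nat_anti i j : sgn_nat i j = - sgn_nat j i.
Proof. unfold sgn_nat. destruct (Nat.ltb_spec i j), (Nat.ltb_spec j i); lia || lra. Qed.

Lemma rsum_neq_antisym N (a : nat -> nat -> R) (v : nat -> R) :
  (forall i j, a j i = - a i j) ->
  rsum_neq N (fun i j => a i j * (v i - v j))
  = 2 * rsum N (fun i => v i * rsum N (fun j => if Nat.eqb i j then 0 else a i j)).
Proof.
  intros Ha. set (S := rsum N (fun i => rsum N (fun j =>
    if Nat.eqb i j then 0 else a i j * v i))).
  assert (HS : rsum N (fun i => rsum N (fun j => if Nat.eqb i j then 0 else a i j * v j)) = - S).
  { rewrite rsum_comm. unfold S. rewrite <- rsum_opp. apply rsum_ext. intros i _.
    rewrite <- rsum_opp. apply rsum_ext. intros j _.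
    rewrite Nat.eqb_sym, (Ha j i). destruct (Nat.eqb i j); ring. }
  unfold rsum_neq. transitivity (S - - S).
  - rewrite <- HS. unfold S. rewrite <- rsum_minus. apply rsum_ext. intros i _.
    rewrite <- rsum_minus. apply rsum_ext. intros j _. destruct (Nat.eqb i j); ring.
  - replace (S - - S) with (2 * S) by ring. f_equal. apply rsum_ext. intros i _.
    rewrite <- rsum_scal. apply rsum_ext. intros j _. destruct (Nat.eqb i j); ring.
Qed.

Lemma rsum_mul_gap_force N m x v :
  rsum N (fun i => v i * gap_force N m x i) = gap_sum_dir N m x v.
Proof.
  unfold gap_force, gap_sum_dir. destruct N as [|n]; [reflexivity|].
  replace (S n - 1)%nat with n by lia.
  set (w k := Rpower (x (k + 1)%nat - x k) (- m)).
  rewrite (rsum_ext _ _ (fun i =>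
     - (if Nat.ltb (i + 1) (S n) then v i * w i else 0)
     + (match i with O => 0 | S k => v (k + 1)%nat * w k end))).
  2:{ intros [|k] _; unfold w; rewrite ?Nat.add_1_r;
      destruct (Nat.ltb _ _); ring. }
  rewrite rsum_plus, rsum_opp, rsum_S, rsum_Sl.
  rewrite (proj2 (Nat.ltb_ge (n + 1) (S n))) by lia.
  rewrite (rsum_ext n (fun i => if Nat.ltb (i + 1) (S n) then v i * w i else 0)
             (fun i => v i * w i)).
  2:{ intros i Hi. rewrite (proj2 (Nat.ltb_lt (i + 1) (S n))) by lia. reflexivity. }
  rewrite (rsum_ext n (fun k => Rpower (x (k + 1)%nat - x k) (- m) * (v (k + 1)%nat - v k))
             (fun k => v (k + 1)%nat * w k - v k * w k)) by (intros; unfold w; ring).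
  rewrite rsum_minus. ring.
Qed.

Lemma rsum_mul_pair_force N m x v :
  rsum N (fun i => v i * pair_force N m x i) = - / 2 * pair_sum_dir N m x v.
Proof.
  set (a i j := sgn_nat j i * Rpower (Rabs (x i - x j)) (- m)).
  unfold pair_sum_dir. rewrite (rsum_neq_antisym N a).
  2:{ intros i j. unfold a. rewrite sgn_nat_anti, Rabs_minus_sym. ring. }
  rewrite <- rsum_scal, <- rsum_scal. apply rsum_ext. intros i _.
  unfold pair_force. rewrite <- !rsum_scal. apply rsum_ext. intros j _.
  rewrite Nat.eqb_sym. unfold a. destruct (Nat.eqb i j); [ring|].
  rewrite sgn_nat_anti, Rabs_minus_sym. field.
Qed.

Lemma rsum_mul_flow_rhs N m chi x v :
  rsum N (fun i => v i * flow_rhs N m chi x i)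
  = gap_sum_dir N m x v - chi * pair_sum_dir N m x v.
Proof.
  rewrite (rsum_ext N _ (fun i => v i * gap_force N m x i
                               + 2 * chi * (v i * pair_force N m x i)))
    by (intros; rewrite flow_rhsE; ring).
  rewrite rsum_plus, rsum_scal, rsum_mul_gap_force, rsum_mul_pair_force. field.
Qed.

(* Translation invariance of [FNm]: the centre of mass is conserved. *)
Lemma rsum_flow_rhs N m chi x : rsum N (flow_rhs N m chi x) = 0.
Proof.
  rewrite (rsum_ext N _ (fun i => 1 * flow_rhs N m chi x i)) by (intros; ring).
  rewrite rsum_mul_flow_rhs. unfold gap_sum_dir, pair_sum_dir, rsum_neq.
  rewrite (rsum_zero (N - 1)) by (intros; ring).
  rewrite (rsum_zero N); [ring|]. intros i _.
  apply rsum_zero. intros j _. destruct (Nat.eqb i j); ring.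
Qed.

Lemma Rpower_pos a p : 0 < Rpower a p.
Proof. apply exp_pos. Qed.

Lemma Rpower_opp_le d a m : 0 < d -> d <= a -> 0 <= m -> Rpower a (- m) <= Rpower d (- m).
Proof.
  intros Hd Ha Hm. rewrite !Rpower_Ropp. apply Rinv_le_contravar; [apply Rpower_pos|].
  apply Rle_Rpower_l; lra.
Qed.

Lemma Rpower_opp_mul a m : 0 < a -> Rpower a (- m) * a = Rpower a (1 - m).
Proof.
  intros Ha. replace (1 - m) with (- m + 1) by ring. rewrite Rpower_plus, Rpower_1 by auto. ring.
Qed.

Lemma is_derive_Rpower a p : 0 < a -> is_derive (fun y => Rpower y p) a (p * Rpower a (p - 1)).
Proof. intros Ha. apply is_derive_Reals, derivable_pt_lim_power, Ha. Qed.

Lemma continuous_Rpower a p : 0 < a -> continuous (fun y => Rpower y p) a.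
Proof.
  intros Ha. apply (ex_derive_continuous (K:=R_AbsRing) (V:=R_NormedModule)).
  eexists. apply is_derive_Rpower, Ha.
Qed.

Lemma Rpower_opp_lipschitz d a b m : 0 < d -> d <= a -> d <= b -> 0 <= m ->
  Rabs (Rpower a (- m) - Rpower b (- m)) <= m * Rpower d (- m - 1) * Rabs (a - b).
Proof.
  intros Hd Ha Hb Hm.
  assert (Hmin : d <= Rmin b a) by (apply Rmin_glb; lra).
  destruct (MVT_gen (fun y => Rpower y (- m)) b a (fun y => - m * Rpower y (- m - 1)))
    as [c [Hc ->]].
  - intros y Hy. apply is_derive_Rpower. lra.
  - intros y Hy. apply continuity_pt_filterlim, continuous_Rpower. lra.
  - rewrite !Rabs_mult, Rabs_Ropp, (Rabs_pos_eq m), (Rabs_pos_eq (Rpower c _))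
      by (lra || apply Rlt_le, Rpower_pos).
    apply Rmult_le_compat_r; [apply Rabs_pos|]. apply Rmult_le_compat_l; [lra|].
    replace (- m - 1) with (- (m + 1)) by ring. apply Rpower_opp_le; lra.
Qed.

Lemma Rabs_sgn_nat_le i j : Rabs (sgn_nat i j) <= 1.
Proof.
  unfold sgn_nat. destruct (Nat.ltb i j); [|destruct (Nat.ltb j i)];
  unfold Rabs; destruct Rcase_abs; lra.
Qed.

Lemma Rabs_sub_sub_le N x y e i j : (forall k, (k < N)%nat -> Rabs (x k - y k) <= e) ->
  (i < N)%nat -> (j < N)%nat -> Rabs ((x j - x i) - (y j - y i)) <= 2 * e.
Proof.
  intros Hxy Hi Hj. replace ((x j - x i) - (y j - y i)) with ((x j - y j) - (x i - y i)) by ring.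
  eapply Rle_trans; [apply Rabs_triang|]. rewrite Rabs_Ropp.
  pose proof (Hxy i Hi). pose proof (Hxy j Hj). lra.
Qed.

Section ForceBounds.

Variables (N : nat) (m d : R).
Hypotheses (Hd : 0 < d) (Hm : 0 <= m).

Lemma Rabs_gap_force_le x i : separated N d x -> (i < N)%nat ->
  Rabs (gap_force N m x i) <= 2 * Rpower d (- m).
Proof.
  intros Hx Hi. unfold gap_force.
  pose proof (Rpower_pos d (- m)).
  replace (2 * Rpower d (- m)) with (Rpower d (- m) + Rpower d (- m)) by ring.
  eapply Rle_trans; [apply Rabs_triang|]. apply Rplus_le_compat.
  - destruct (Nat.ltb_spec (i + 1) N); [|rewrite Rabs_R0; lra].
    rewrite Rabs_Ropp, Rabs_pos_eq by apply Rlt_le, Rpower_pos.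
    apply Rpower_opp_le; auto.
  - destruct i as [|k]; [rewrite Rabs_R0; lra|].
    rewrite Rabs_pos_eq by apply Rlt_le, Rpower_pos.
    apply Rpower_opp_le; auto. rewrite <- Nat.add_1_r. apply Hx. lia.
Qed.

Lemma Rabs_pair_force_le x i : separated N d x -> (i < N)%nat ->
  Rabs (pair_force N m x i) <= INR N * Rpower d (- m).
Proof.
  intros Hx Hi. apply Rabs_rsum_le. intros j Hj.
  pose proof (Rpower_pos d (- m)).
  destruct (Nat.eqb_spec j i) as [_|Hji]; [rewrite Rabs_R0; lra|].
  rewrite Rabs_mult, (Rabs_pos_eq (Rpower _ _)) by apply Rlt_le, Rpower_pos.
  pose proof (Rabs_sgn_nat_le i j). pose proof (Rabs_pos (sgn_nat i j)).
  assert (Rpower (Rabs (x j - x i)) (- m) <= Rpower d (- m)).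
  { apply Rpower_opp_le; auto. apply (separated_Rabs N); auto; lra. }
  pose proof (Rpower_pos (Rabs (x j - x i)) (- m)). nra.
Qed.

Section Lipschitz.

Variables (x y : nat -> R) (e : R).
Hypotheses (Hx : separated N d x) (Hy : separated N d y)
  (Hxy : forall k, (k < N)%nat -> Rabs (x k - y k) <= e).

Let Q := m * Rpower d (- m - 1) * (2 * e).

Lemma Rpower_opp_sub_le a b : d <= a -> d <= b -> Rabs (a - b) <= 2 * e ->
  Rabs (Rpower a (- m) - Rpower b (- m)) <= Q.
Proof.
  intros Ha Hb Hab. eapply Rle_trans; [apply Rpower_opp_lipschitz; eauto|].
  apply Rmult_le_compat_l; [|lra].
  pose proof (Rpower_pos d (- m - 1)). apply Rmult_le_pos; lra.
Qed.

Lemma Q_nonneg : (0 < N)%nat -> 0 <= Q.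
Proof.
  intros HN. pose proof (Hxy 0%nat HN). pose proof (Rabs_pos (x 0%nat - y 0%nat)).
  pose proof (Rpower_pos d (- m - 1)). unfold Q.
  apply Rmult_le_pos; [apply Rmult_le_pos|]; lra.
Qed.

Lemma Rabs_gap_force_sub_le i : (i < N)%nat ->
  Rabs (gap_force N m x i - gap_force N m y i) <= 2 * Q.
Proof.
  intros Hi. pose proof (Q_nonneg ltac:(lia)). unfold gap_force.
  match goal with |- Rabs (?a1 + ?b1 - (?a2 + ?b2)) <= _ =>
    replace (a1 + b1 - (a2 + b2)) with ((a1 - a2) + (b1 - b2)) by ring end.
  replace (2 * Q) with (Q + Q) by ring.
  eapply Rle_trans; [apply Rabs_triang|]. apply Rplus_le_compat.
  - destruct (Nat.ltb_spec (i + 1) N); [|rewrite Rminus_0_r, Rabs_R0; lra].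
    rewrite <- Rabs_Ropp. replace (- (_ - _)) with
      (Rpower (x (i + 1)%nat - x i) (- m) - Rpower (y (i + 1)%nat - y i) (- m)) by ring.
    apply Rpower_opp_sub_le; [apply Hx | apply Hy | apply (Rabs_sub_sub_le N)]; auto.
  - destruct i as [|k]; [rewrite Rminus_0_r, Rabs_R0; lra|].
    pose proof (Hx k ltac:(lia)). pose proof (Hy k ltac:(lia)). rewrite Nat.add_1_r in *.
    apply Rpower_opp_sub_le; auto. apply (Rabs_sub_sub_le N); auto; lia.
Qed.

Lemma Rabs_pair_force_sub_le i : (i < N)%nat ->
  Rabs (pair_force N m x i - pair_force N m y i) <= INR N * Q.
Proof.
  intros Hi. pose proof (Q_nonneg ltac:(lia)).
  unfold pair_force. rewrite <- rsum_minus. apply Rabs_rsum_le. intros j Hj.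
  destruct (Nat.eqb_spec j i) as [_|Hji]; [rewrite Rminus_0_r, Rabs_R0; lra|].
  rewrite <- Rmult_minus_distr_l, Rabs_mult.
  assert (Rabs (Rpower (Rabs (x j - x i)) (- m) - Rpower (Rabs (y j - y i)) (- m)) <= Q).
  { apply Rpower_opp_sub_le; try (apply (separated_Rabs N); auto; lra).
    eapply Rle_trans; [apply Rabs_triang_inv2|]. apply (Rabs_sub_sub_le N); auto. }
  pose proof (Rabs_sgn_nat_le i j). pose proof (Rabs_pos (sgn_nat i j)).
  pose proof (Rabs_pos (Rpower (Rabs (x j - x i)) (- m) - Rpower (Rabs (y j - y i)) (- m))).
  nra.
Qed.

End Lipschitz.
End ForceBounds.

Definition flow_bound (N : nat) (m chi d : R) : R :=
  (2 + 2 * Rabs chi * INR N) * Rpower d (- m).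

Definition flow_lipschitz (N : nat) (m chi d : R) : R :=
  (2 + 2 * Rabs chi * INR N) * (2 * m * Rpower d (- m - 1)).

Lemma flow_bound_nonneg N m chi d : 0 <= flow_bound N m chi d.
Proof.
  pose proof (Rabs_pos chi). pose proof (pos_INR N). pose proof (Rpower_pos d (- m)).
  unfold flow_bound. apply Rmult_le_pos; [|lra]. nra.
Qed.

Lemma flow_lipschitz_nonneg N m chi d : 0 <= m -> 0 <= flow_lipschitz N m chi d.
Proof.
  intros Hm. pose proof (Rabs_pos chi). pose proof (pos_INR N).
  pose proof (Rpower_pos d (- m - 1)). unfold flow_lipschitz. apply Rmult_le_pos; nra.
Qed.

Lemma Rabs_flow_rhs_le N m chi d x i : 0 < d -> 0 <= m -> separated N d x -> (i < N)%nat ->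
  Rabs (flow_rhs N m chi x i) <= flow_bound N m chi d.
Proof.
  intros Hd Hm Hx Hi. rewrite flow_rhsE. unfold flow_bound.
  pose proof (Rabs_gap_force_le N m d Hd Hm x i Hx Hi).
  pose proof (Rabs_pair_force_le N m d Hd Hm x i Hx Hi).
  pose proof (Rabs_pos chi). pose proof (Rabs_pos (pair_force N m x i)).
  eapply Rle_trans; [apply Rabs_triang|]. rewrite !Rabs_mult, (Rabs_pos_eq 2) by lra. nra.
Qed.

Lemma Rabs_flow_rhs_sub_le N m chi d x y e i : 0 < d -> 0 <= m ->
  separated N d x -> separated N d y ->
  (forall k, (k < N)%nat -> Rabs (x k - y k) <= e) -> (i < N)%nat ->
  Rabs (flow_rhs N m chi x i - flow_rhs N m chi y i) <= flow_lipschitz N m chi d * e.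
Proof.
  intros Hd Hm Hx Hy Hxy Hi. rewrite !flow_rhsE. unfold flow_lipschitz.
  pose proof (Rabs_gap_force_sub_le N m d Hd Hm x y e Hx Hy Hxy i Hi).
  pose proof (Rabs_pair_force_sub_le N m d Hd Hm x y e Hx Hy Hxy i Hi).
  pose proof (Rabs_pos chi). pose proof (Rabs_pos (pair_force N m x i - pair_force N m y i)).
  replace (gap_force N m x i + 2 * chi * pair_force N m x i
           - (gap_force N m y i + 2 * chi * pair_force N m y i))
    with ((gap_force N m x i - gap_force N m y i)
          + 2 * chi * (pair_force N m x i - pair_force N m y i)) by ring.
  eapply Rle_trans; [apply Rabs_triang|]. rewrite !Rabs_mult, (Rabs_pos_eq 2) by lra. nra.
Qed.

(** * Energy and second moment along the flow *)

Lemma is_derive_Rpower_comp (u : R -> R) t du p : is_derive u t du -> 0 < u t ->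
  is_derive (fun s => Rpower (u s) p) t (p * Rpower (u t) (p - 1) * du).
Proof.
  intros Hu Hp. replace (p * Rpower (u t) (p - 1) * du) with (scal du (p * Rpower (u t) (p - 1)))
    by (unfold scal; simpl; unfold mult; simpl; ring).
  apply (is_derive_comp (fun y => Rpower y p) u); [apply is_derive_Rpower|]; auto.
Qed.

Lemma is_derive_gap_sum N m (X : R -> nat -> R) t (V : nat -> R) :
  ordered N (X t) -> (forall i, (i < N)%nat -> is_derive (fun s => X s i) t (V i)) ->
  is_derive (fun s => gap_sum N m (X s)) t ((1 - m) * gap_sum_dir N m (X t) V).
Proof.
  intros Ho Hd. unfold gap_sum, gap_sum_dir. rewrite <- rsum_scal.
  apply (is_derive_rsum (N - 1) (fun i s => Rpower (X s (i + 1)%nat - X s i) (1 - m))).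
  intros i Hi. replace (1 - m - 1) with (- m) by ring.
  replace ((1 - m) * (Rpower (X t (i + 1)%nat - X t i) (- m) * (V (i + 1)%nat - V i)))
    with ((1 - m) * Rpower (X t (i + 1)%nat - X t i) (1 - m - 1) * (V (i + 1)%nat - V i))
    by (replace (1 - m - 1) with (- m) by ring; ring).
  apply (is_derive_Rpower_comp (fun s => X s (i + 1)%nat - X s i)).
  - apply (is_derive_minus (V:=R_NormedModule)); apply Hd; lia.
  - pose proof (Ho i ltac:(lia)). lra.
Qed.

Lemma is_derive_pair_sum N m (X : R -> nat -> R) t (V : nat -> R) :
  ordered N (X t) -> (forall i, (i < N)%nat -> is_derive (fun s => X s i) t (V i)) ->
  is_derive (fun s => pair_sum N m (X s)) t ((1 - m) * pair_sum_dir N m (X t) V).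
Proof.
  intros Ho Hd. unfold pair_sum, pair_sum_dir, rsum_neq. rewrite <- rsum_scal.
  apply (is_derive_rsum N (fun i s => rsum N (fun j =>
    if Nat.eqb i j then 0 else Rpower (Rabs (X s i - X s j)) (1 - m)))).
  intros i Hi. rewrite <- rsum_scal.
  apply (is_derive_rsum N (fun j s =>
    if Nat.eqb i j then 0 else Rpower (Rabs (X s i - X s j)) (1 - m))).
  intros j Hj. destruct (Nat.eqb_spec i j) as [_|Hij].
  - rewrite Rmult_0_r. exact (is_derive_const (V:=R_NormedModule) 0 t).
  - pose proof (ordered_sub_neq0 N (X t) i j Ho Hij Hi Hj) as Hne.
    replace ((1 - m) * (sgn_nat j i * Rpower (Rabs (X t i - X t j)) (- m) * (V i - V j)))
      with ((1 - m) * Rpower (Rabs (X t i - X t j)) (1 - m - 1)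
            * (sign (X t i - X t j) * (V i - V j)))
      by (rewrite (sign_sub_ordered N) by auto; replace (1 - m - 1) with (- m) by ring; ring).
    apply (is_derive_Rpower_comp (fun s => Rabs (X s i - X s j))); [|now apply Rabs_pos_lt].
    apply (is_derive_Rabs (fun s => X s i - X s j)); auto.
    apply (is_derive_minus (V:=R_NormedModule)); apply Hd; auto.
Qed.

Lemma gap_sum_dir_self N m x : ordered N x -> gap_sum_dir N m x x = gap_sum N m x.
Proof.
  intros Ho. apply rsum_ext. intros i Hi.
  apply Rpower_opp_mul. pose proof (Ho i ltac:(lia)). lra.
Qed.

Lemma pair_sum_dir_self N m x : ordered N x -> pair_sum_dir N m x x = pair_sum N m x.
Proof.
  intros Ho. apply rsum_ext. intros i Hi. apply rsum_ext. intros j Hj.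
  destruct (Nat.eqb_spec i j) as [_|Hij]; [reflexivity|].
  pose proof (ordered_sub_neq0 N x i j Ho Hij Hi Hj) as Hne.
  rewrite <- (sign_sub_ordered N x i j), <- (Rpower_opp_mul (Rabs (x i - x j)))
    by (auto || now apply Rabs_pos_lt).
  destruct (Rlt_dec (x i - x j) 0).
  - rewrite sign_eq_m1, (Rabs_left (x i - x j)) by auto. ring.
  - rewrite sign_eq_1, (Rabs_pos_eq (x i - x j)) by lra. ring.
Qed.

(* [flow_rhs] is minus the gradient of [FNm]. *)
Lemma is_derive_FNm_flow N m chi (X : R -> nat -> R) t : 1 < m -> ordered N (X t) ->
  (forall i, (i < N)%nat -> is_derive (fun s => X s i) t (flow_rhs N m chi (X t) i)) ->
  is_derive (fun s => FNm N m chi (X s)) t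
    (- rsum N (fun i => flow_rhs N m chi (X t) i * flow_rhs N m chi (X t) i)).
Proof.
  intros Hm Ho Hd. unfold FNm. rewrite rsum_mul_flow_rhs.
  set (V := flow_rhs N m chi (X t)).
  replace (- (gap_sum_dir N m (X t) V - chi * pair_sum_dir N m (X t) V))
    with (/ (m - 1) * ((1 - m) * gap_sum_dir N m (X t) V)
          - chi / (m - 1) * ((1 - m) * pair_sum_dir N m (X t) V)) by (field; lra).
  apply (is_derive_minus (V:=R_NormedModule)); apply is_derive_scal;
    [apply is_derive_gap_sum | apply is_derive_pair_sum]; auto.
Qed.

(* [FNm] is homogeneous of degree [1 - m], so Euler's identity gives the
   derivative of the second moment. *)
Lemma is_derive_moment_flow N m chi (X : R -> nat -> R) t : 1 < m -> ordered N (X t) ->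
  (forall i, (i < N)%nat -> is_derive (fun s => X s i) t (flow_rhs N m chi (X t) i)) ->
  is_derive (fun s => rsum N (fun i => X s i * X s i)) t (2 * (m - 1) * FNm N m chi (X t)).
Proof.
  intros Hm Ho Hd.
  replace (2 * (m - 1) * FNm N m chi (X t)) with
    (rsum N (fun i => flow_rhs N m chi (X t) i * X t i + X t i * flow_rhs N m chi (X t) i)).
  2:{ rewrite rsum_plus.
      rewrite (rsum_ext N (fun i => flow_rhs N m chi (X t) i * X t i)
                 (fun i => X t i * flow_rhs N m chi (X t) i)) by (intros; ring).
      rewrite rsum_mul_flow_rhs, gap_sum_dir_self, pair_sum_dir_self by auto.
      unfold FNm. field. lra. }
  apply (is_derive_rsum N (fun i s => X s i * X s i)). intros i Hi.
  apply (is_derive_mult (K:=R_AbsRing));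
    [apply Hd; auto | apply Hd; auto | intros; apply Rmult_comm].
Qed.

Lemma filterlim_Rminus {T} (F : (T -> Prop) -> Prop) {FF : Filter F} (f g : T -> R) a b :
  filterlim f F (locally a) -> filterlim g F (locally b) ->
  filterlim (fun s => f s - g s) F (locally (a - b)).
Proof.
  intros Hf Hg. apply (filterlim_comp_2 f g Rminus Hf Hg).
  apply (filterlim_comp_2 fst (fun z => opp (snd z)) plus (V:=R_NormedModule)
           (G:=locally a) (H:=locally (opp b))).
  - apply filterlim_fst.
  - eapply filterlim_comp; [apply filterlim_snd | apply (filterlim_opp (V:=R_NormedModule))].
  - apply (filterlim_plus (V:=R_NormedModule)).
Qed.

Lemma filterlim_FNm {T} (F : (T -> Prop) -> Prop) {FF : Filter F} N m chi
    (X : T -> nat -> R) x :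
  ordered N x -> (forall i, (i < N)%nat -> filterlim (fun s => X s i) F (locally (x i))) ->
  filterlim (fun s => FNm N m chi (X s)) F (locally (FNm N m chi x)).
Proof.
  intros Ho Hl. unfold FNm.
  assert (Hscal : forall c (g : T -> R) l, filterlim g F (locally l) ->
            filterlim (fun s => c * g s) F (locally (c * l))).
  { intros c g l Hg. eapply filterlim_comp; [exact Hg|].
    apply (continuous_scal_r (K:=R_AbsRing) (V:=R_NormedModule) c id), filterlim_id. }
  apply (filterlim_Rminus F (FF:=FF)); apply Hscal.
  - apply (filterlim_rsum F (N - 1)
             (fun i s => Rpower (X s (i + 1)%nat - X s i) (1 - m))). intros i Hi.
    apply (filterlim_comp _ _ _ (fun s => X s (i + 1)%nat - X s i) (fun y => Rpower y (1 - m))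
              F (locally (x (i + 1)%nat - x i))).
    { apply (filterlim_Rminus F (FF:=FF)); apply Hl; lia. }
    apply continuous_Rpower. pose proof (Ho i ltac:(lia)). lra.
  - apply (filterlim_rsum F N). intros i Hi. apply (filterlim_rsum F N). intros j Hj.
    destruct (Nat.eqb_spec i j) as [_|Hij]; [apply filterlim_const|].
    apply (filterlim_comp _ _ _ (fun s => Rabs (X s i - X s j)) (fun y => Rpower y (1 - m))
              F (locally (Rabs (x i - x j)))).
    { apply (filterlim_comp _ _ _ (fun s => X s i - X s j) Rabs F (locally (x i - x j)));
        [|apply continuous_Rabs].
      apply (filterlim_Rminus F (FF:=FF)); apply Hl; auto. }
    apply continuous_Rpower, Rabs_pos_lt, (ordered_sub_neq0 N); auto.
Qed.

(** * Finite existence time *)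

Lemma Rbar_lt_le_trans (u t : R) (T : Rbar) : u <= t -> Rbar_lt t T -> Rbar_lt u T.
Proof. intros. destruct T; simpl in *; auto; lra. Qed.

Lemma is_derive_continuity_pt (f : R -> R) t df : is_derive f t df -> continuity_pt f t.
Proof.
  intros H. apply continuity_pt_filterlim.
  apply (ex_derive_continuous (K:=R_AbsRing) (V:=R_NormedModule)). now exists df.
Qed.

Lemma is_derive_sub_le (f df : R -> R) s t c : s <= t ->
  (forall u, s <= u <= t -> is_derive f u (df u)) -> (forall u, s <= u <= t -> df u <= c) ->
  f t - f s <= c * (t - s).
Proof.
  intros Hst Hd Hc. destruct (MVT_gen f s t df) as [u [Hu ->]];
    rewrite ?Rmin_left, ?Rmax_right in * by lra.
  - intros u Hu. apply Hd. lra.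
  - intros u Hu. eapply is_derive_continuity_pt, Hd, Hu.
  - apply Rmult_le_compat_r; [lra | apply Hc, Hu].
Qed.

Section FiniteTime.

Variables (N : nat) (m chi : R) (X0 : nat -> R) (T : Rbar) (X : R -> nat -> R).
Hypotheses (Hm : 1 < m) (HX : is_solution N m chi X0 T X).

Let E t := FNm N m chi (X t).
Let M t := rsum N (fun i => X t i * X t i).

Lemma solution_ordered t : 0 <= t -> Rbar_lt t T -> ordered N (X t).
Proof. intros Ht HtT. destruct HX as (_ & _ & HR & _). exact (proj1 (HR t Ht HtT)). Qed.

Lemma solution_is_derive t i : 0 < t -> Rbar_lt t T -> (i < N)%nat ->
  is_derive (fun s => X s i) t (flow_rhs N m chi (X t) i).
Proof. intros Ht HtT Hi. destruct HX as (_ & _ & _ & _ & Hd). now apply Hd. Qed.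

Lemma solution_FNm_nonincreasing s t : 0 < s -> s <= t -> Rbar_lt t T -> E t <= E s.
Proof.
  intros Hs Hst HtT.
  assert (Hle : forall u, s <= u <= t -> Rbar_lt u T) by
    (intros u Hu; apply (Rbar_lt_le_trans u t); auto; lra).
  enough (E t - E s <= 0 * (t - s)) by lra.
  apply (is_derive_sub_le E (fun u => - rsum N (fun i =>
           flow_rhs N m chi (X u) i * flow_rhs N m chi (X u) i))); auto.
  - intros u Hu. apply is_derive_FNm_flow; auto.
    + apply solution_ordered; auto; lra.
    + intros i Hi. apply solution_is_derive; auto; lra.
  - intros u _. pose proof (rsum_nonneg N (fun i =>
      flow_rhs N m chi (X u) i * flow_rhs N m chi (X u) i) (fun i _ => Rle_0_sqr _)). lra.
Qed.

Lemma solution_FNm_neg : ordered N X0 -> FNm N m chi X0 < 0 ->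
  exists s0, 0 < s0 /\ Rbar_lt s0 T /\ E s0 < 0.
Proof.
  intros HX0 HF. destruct HX as (HT & _ & _ & Hlim & _).
  assert (Hl : filterlim E (at_right 0) (locally (FNm N m chi X0))) by
    now apply (filterlim_FNm (at_right 0) (FF:=@filter_filter _ _ (at_right_proper_filter 0))).
  destruct (proj1 (filterlim_locally _ _) Hl (mkposreal (- FNm N m chi X0) ltac:(lra)))
    as [d Hd].
  set (Tf := match T with Finite a => a / 2 | _ => 1 end).
  assert (HTf : 0 < Tf /\ Rbar_lt Tf T) by (unfold Tf; destruct T; simpl in *; lra || tauto).
  pose proof (cond_pos d). pose proof (Rmin_l (d / 2) Tf). pose proof (Rmin_r (d / 2) Tf).
  set (s0 := Rmin (d / 2) Tf) in *.
  assert (Hs0 : 0 < s0) by (apply Rmin_pos; lra).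
  exists s0. split; [auto|]. split; [apply (Rbar_lt_le_trans s0 Tf); tauto|].
  assert (Hb : ball 0 d s0).
  { change (Rabs (s0 - 0) < d). rewrite Rminus_0_r, Rabs_pos_eq; lra. }
  specialize (Hd s0 Hb Hs0). apply Rabs_def2 in Hd. unfold minus, plus, opp in Hd. simpl in Hd.
  lra.
Qed.

Lemma solution_time_finite : ordered N X0 -> FNm N m chi X0 < 0 -> exists T0, T = Finite T0.
Proof.
  intros HX0 HF. destruct (solution_FNm_neg HX0 HF) as (s0 & Hs0 & Hs0T & HE0).
  assert (HMs : 0 <= M s0) by (apply rsum_nonneg; intros; apply Rle_0_sqr).
  set (tau := M s0 / (2 * (m - 1) * - E s0)).
  assert (Htau : 0 <= tau) by (apply Rdiv_le_0_compat; [|apply Rmult_lt_0_compat]; lra).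
  (* The moment decreases at rate at least [2 (m - 1) |E s0|] and stays nonnegative. *)
  assert (Hbound : forall t, s0 <= t -> Rbar_lt t T -> t - s0 <= tau).
  { intros t Ht HtT.
    assert (Hle : forall u, s0 <= u <= t -> Rbar_lt u T) by
      (intros u Hu; apply (Rbar_lt_le_trans u t); auto; lra).
    assert (HM : M t - M s0 <= 2 * (m - 1) * E s0 * (t - s0)).
    { apply (is_derive_sub_le M (fun u => 2 * (m - 1) * E u)); auto.
      - intros u Hu. apply is_derive_moment_flow; auto.
        + apply solution_ordered; auto; lra.
        + intros i Hi. apply solution_is_derive; auto; lra.
      - intros u Hu. apply Rmult_le_compat_l; [lra|].
        apply solution_FNm_nonincreasing; auto; lra. }
    assert (HMt : 0 <= M t) by (apply rsum_nonneg; intros; apply Rle_0_sqr).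
    unfold tau. apply Rmult_le_reg_r with (2 * (m - 1) * - E s0);
      [apply Rmult_lt_0_compat; lra|].
    field_simplify; [nra | lra]. }
  destruct T as [T0| |]; [now exists T0| |destruct HX; contradiction].
  specialize (Hbound (s0 + tau + 1) ltac:(lra) I). lra.
Qed.

End FiniteTime.

(** * Picard iteration *)

Lemma is_lim_seq_geom_half C : is_lim_seq (fun n => C * (1 / 2) ^ n) 0.
Proof.
  replace 0 with (C * 0) by ring.
  apply (is_lim_seq_scal_l _ C 0), is_lim_seq_geom. rewrite Rabs_pos_eq; lra.
Qed.

Lemma le_of_le_geom_half a b C : (forall n, a <= b + C * (1 / 2) ^ n) -> a <= b.
Proof.
  intros H. enough (Rbar_le a (b + 0)) by (simpl in *; lra).
  apply (is_lim_seq_le (fun _ => a) (fun n => b + C * (1 / 2) ^ n)); auto.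
  - apply is_lim_seq_const.
  - apply is_lim_seq_plus'; [apply is_lim_seq_const | apply is_lim_seq_geom_half].
Qed.

Lemma Lim_seq_geom_half_close (u : nat -> R) C :
  (forall k n, Rabs (u (k + n)%nat - u k) <= C * (1 / 2) ^ k) ->
  forall k, Rabs (real (Lim_seq u) - u k) <= C * (1 / 2) ^ k.
Proof.
  intros Hu.
  assert (Hc : ex_lim_seq_cauchy u).
  { intros eps. destruct (proj1 (is_lim_seq_Reals _ _) (is_lim_seq_geom_half C) (eps / 2))
      as [K HK]; [apply is_pos_div_2|].
    exists K. intros n n' Hn Hn'. specialize (HK K (le_n K)). unfold R_dist in HK.
    rewrite Rminus_0_r in HK. pose proof (Rle_abs (C * (1 / 2) ^ K)).
    pose proof (Hu K (n - K)%nat) as H1. pose proof (Hu K (n' - K)%nat) as H2.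
    replace (K + (n - K))%nat with n in H1 by lia.
    replace (K + (n' - K))%nat with n' in H2 by lia.
    replace (u n - u n') with ((u n - u K) - (u n' - u K)) by ring.
    eapply Rle_lt_trans; [apply Rabs_triang|]. rewrite Rabs_Ropp. lra. }
  destruct (proj2 (ex_lim_seq_cauchy_corr u) Hc) as [l Hl].
  rewrite (is_lim_seq_unique u l Hl). intros k. simpl.
  enough (Rbar_le (Rabs (l - u k)) (C * (1 / 2) ^ k)) by auto.
  apply (is_lim_seq_le (fun n => Rabs (u (n + k)%nat - u k)) (fun _ => C * (1 / 2) ^ k)).
  - intros n. rewrite Nat.add_comm. apply Hu.
  - apply (is_lim_seq_abs _ (l - u k)), is_lim_seq_minus';
      [apply (is_lim_seq_incr_n u k l), Hl | apply is_lim_seq_const].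
  - apply is_lim_seq_const.
Qed.

Lemma ex_RInt_continuous_R (g : R -> R) a b : (forall s, continuous g s) -> ex_RInt g a b.
Proof. intros Hc. apply (ex_RInt_continuous (V:=R_CompleteNormedModule)). intros; apply Hc. Qed.

Lemma RInt_Rminus (f g : R -> R) a b : ex_RInt f a b -> ex_RInt g a b ->
  RInt (fun x => f x - g x) a b = RInt f a b - RInt g a b.
Proof. apply (RInt_minus (V:=R_CompleteNormedModule)). Qed.

Lemma Rabs_RInt_le_const (g : R -> R) a b K : (forall s, continuous g s) ->
  (forall s, Rabs (g s) <= K) -> Rabs (RInt g a b) <= K * Rabs (b - a).
Proof.
  intros Hc Hb. destruct (Rle_dec a b).
  - rewrite (Rabs_pos_eq (b - a)), Rmult_comm by lra.
    apply abs_RInt_le_const; auto. now apply ex_RInt_continuous_R.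
  - rewrite <- (opp_RInt_swap g b a) by now apply ex_RInt_continuous_R.
    change (Rabs (- RInt g b a) <= K * Rabs (b - a)).
    rewrite Rabs_Ropp, Rabs_minus_sym, (Rabs_pos_eq (a - b)), Rmult_comm by lra.
    apply abs_RInt_le_const; try lra; auto. now apply ex_RInt_continuous_R.
Qed.

Lemma continuous_of_lipschitz_near (f : R -> R) s C : 0 <= C ->
  locally s (fun u => Rabs (f u - f s) <= C * Rabs (u - s)) -> continuous f s.
Proof.
  intros HC [d Hd]. apply continuity_pt_filterlim.
  intros eps He. exists (Rmin d (eps / (C + 1))). split.
  { apply Rmin_pos; [apply cond_pos | apply Rdiv_lt_0_compat; lra]. }
  intros u [_ Hu]. simpl in *. unfold R_dist in *.
  pose proof (Rmin_l d (eps / (C + 1))). pose proof (Rmin_r d (eps / (C + 1))).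
  specialize (Hd u ltac:(change (Rabs (u - s) < d); lra)).
  pose proof (Rabs_pos (u - s)).
  assert (Hu2 : (C + 1) * Rabs (u - s) < eps).
  { replace eps with ((C + 1) * (eps / (C + 1))) by (field; lra).
    apply Rmult_lt_compat_l; lra. }
  nra.
Qed.

Definition clamp (a h t : R) : R := Rmax a (Rmin (a + h) t).

Lemma clamp_range a h t : 0 < h -> a <= clamp a h t <= a + h.
Proof. intros. unfold clamp, Rmax, Rmin. repeat destruct Rle_dec; lra. Qed.

Lemma clamp_lipschitz a h t t' : 0 < h -> Rabs (clamp a h t - clamp a h t') <= Rabs (t - t').
Proof.
  intros. unfold clamp, Rmax, Rmin.
  repeat destruct Rle_dec; unfold Rabs; repeat destruct Rcase_abs; lra.
Qed.

Lemma clamp_id a h t : a <= t <= a + h -> clamp a h t = t.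
Proof. intros. unfold clamp, Rmax, Rmin. repeat destruct Rle_dec; lra. Qed.

Definition in_ball (N : nat) (p : nat -> R) (r : R) (z : nat -> R) : Prop :=
  forall k, (k < N)%nat -> Rabs (z k - p k) <= r.

Section PicardLindelof.

Variables (N : nat) (Fv : (nat -> R) -> nat -> R) (p : nat -> R) (a h r K L : R).
Hypotheses (Hr : 0 < r) (HK : 0 <= K) (HL : 0 <= L) (Hh : 0 < h)
  (HhK : h * K <= r) (HhL : h * L <= 1 / 2)
  (HFbound : forall z, in_ball N p r z -> forall i, (i < N)%nat -> Rabs (Fv z i) <= K)
  (HFlip : forall z w e, in_ball N p r z -> in_ball N p r w ->
     (forall k, (k < N)%nat -> Rabs (z k - w k) <= e) ->
     forall i, (i < N)%nat -> Rabs (Fv z i - Fv w i) <= L * e).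

(* The iterates are defined for all times, frozen outside [a, a + h], so that
   every one of them is globally [K]-Lipschitz with values in the ball. *)
Fixpoint picard (k : nat) : R -> nat -> R :=
  match k with
  | O => fun _ => p
  | S k' => fun t i => p i + RInt (fun s => Fv (picard k' s) i) a (clamp a h t)
  end.

Definition admissible (Z : R -> nat -> R) : Prop :=
  (forall t, in_ball N p r (Z t)) /\
  (forall t t' i, (i < N)%nat -> Rabs (Z t i - Z t' i) <= K * Rabs (t - t')).

Lemma admissible_Fv_continuous Z i s : admissible Z -> (i < N)%nat ->
  continuous (fun u => Fv (Z u) i) s.
Proof.
  intros [HB HZ] Hi. apply (continuous_of_lipschitz_near _ _ (L * K)); [nra|].
  apply filter_forall. intros u. rewrite Rmult_assoc. apply HFlip; auto.
Qed.

Lemma Rabs_RInt_Fv_sub_le (Z W : R -> nat -> R) e t i : 0 <= e -> a <= t <= a + h ->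
  ex_RInt (fun s => Fv (Z s) i) a t -> ex_RInt (fun s => Fv (W s) i) a t -> (i < N)%nat ->
  (forall s, a <= s <= t -> in_ball N p r (Z s) /\ in_ball N p r (W s) /\
     forall k, (k < N)%nat -> Rabs (Z s k - W s k) <= e) ->
  Rabs (RInt (fun s => Fv (Z s) i) a t - RInt (fun s => Fv (W s) i) a t) <= e / 2.
Proof.
  intros He Ht HZ HW Hi HZW. rewrite <- RInt_Rminus by auto.
  eapply Rle_trans.
  { apply (abs_RInt_le_const _ a t (L * e));
      [lra | apply (ex_RInt_minus (V:=R_NormedModule)); auto|].
    intros s Hs. destruct (HZW s Hs) as (? & ? & ?). apply HFlip; auto. }
  assert ((t - a) * (L * e) <= h * L * e) by (rewrite <- Rmult_assoc; apply Rmult_le_compat_r; nra).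
  nra.
Qed.

Lemma picard_admissible k : admissible (picard k).
Proof.
  induction k as [|k IH].
  - split; [intros t k Hk | intros t t' k Hk]; simpl; rewrite Rminus_diag, Rabs_R0; [lra|].
    apply Rmult_le_pos; [auto | apply Rabs_pos].
  - set (g i := fun s => Fv (picard k s) i).
    assert (Hc : forall i s, (i < N)%nat -> continuous (g i) s)
      by (intros; now apply admissible_Fv_continuous).
    assert (Hg : forall i s, (i < N)%nat -> Rabs (g i s) <= K)
      by (intros; apply HFbound; auto; apply IH).
    split.
    + intros t j Hj. simpl. fold (g j). rewrite Rplus_minus_l.
      eapply Rle_trans; [apply Rabs_RInt_le_const; intros; [apply Hc | apply Hg]; auto|].
      pose proof (clamp_range a h t Hh). rewrite Rabs_pos_eq by lra. nra.
    + intros t t' j Hj. simpl. fold (g j).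
      assert (Hch : RInt (g j) a (clamp a h t)
                    = RInt (g j) a (clamp a h t') + RInt (g j) (clamp a h t') (clamp a h t)).
      { symmetry. apply (RInt_Chasles (V:=R_CompleteNormedModule));
          apply ex_RInt_continuous_R; intros; auto. }
      rewrite Hch, (fun c x y => ltac:(ring) : c + (x + y) - (c + x) = y).
      eapply Rle_trans; [apply Rabs_RInt_le_const; intros; [apply Hc | apply Hg]; auto|].
      apply Rmult_le_compat_l; auto. apply clamp_lipschitz; auto.
Qed.

Lemma picard_ex_RInt k i u v : (i < N)%nat -> ex_RInt (fun s => Fv (picard k s) i) u v.
Proof.
  intros. apply ex_RInt_continuous_R. intros.
  apply admissible_Fv_continuous; [apply picard_admissible | auto].
Qed.

Lemma picard_step_le k t i : (i < N)%nat ->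
  Rabs (picard (S k) t i - picard k t i) <= r * (1 / 2) ^ k.
Proof.
  revert t i. induction k as [|k IH]; intros t i Hi.
  - simpl. rewrite Rplus_minus_l, Rmult_1_r.
    eapply Rle_trans; [apply (Rabs_RInt_le_const _ _ _ K)|].
    + intros; apply continuous_const.
    + intros. apply HFbound; auto. intros j _. rewrite Rminus_diag, Rabs_R0. lra.
    + pose proof (clamp_range a h t Hh). rewrite Rabs_pos_eq by lra. nra.
  - pose proof (clamp_range a h t Hh).
    change (Rabs ((p i + RInt (fun s => Fv (picard (S k) s) i) a (clamp a h t))
                  - (p i + RInt (fun s => Fv (picard k s) i) a (clamp a h t)))
            <= r * (1 / 2) ^ S k).
    replace (r * (1 / 2) ^ S k) with (r * (1 / 2) ^ k / 2) by (simpl; field).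
    rewrite (fun c x y => ltac:(ring) : (c + x) - (c + y) = x - y).
    pose proof (pow_lt (1 / 2) k ltac:(lra)).
    apply Rabs_RInt_Fv_sub_le; try apply picard_ex_RInt; auto; [nra|].
    intros s _. split; [apply picard_admissible|]. split; [apply picard_admissible|]. auto.
Qed.

Lemma picard_cauchy k n t i : (i < N)%nat ->
  Rabs (picard (k + n) t i - picard k t i) <= 2 * r * (1 / 2) ^ k.
Proof.
  intros Hi. pose proof (pow_lt (1 / 2) k ltac:(lra)).
  enough (Rabs (picard (k + n) t i - picard k t i) <= 2 * r * (1 / 2) ^ k * (1 - (1 / 2) ^ n))
    by (assert (0 < 2 * r * (1 / 2) ^ k * (1 / 2) ^ n)
          by (repeat apply Rmult_lt_0_compat; try apply pow_lt; lra); nra).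
  induction n as [|n IH].
  - rewrite Nat.add_0_r, Rminus_diag, Rabs_R0. simpl. lra.
  - rewrite Nat.add_succ_r.
    pose proof (picard_step_le (k + n) t i Hi) as Hs. rewrite pow_add in Hs.
    replace (picard (S (k + n)) t i - picard k t i) with
      ((picard (S (k + n)) t i - picard (k + n) t i) + (picard (k + n) t i - picard k t i))
      by ring.
    eapply Rle_trans; [apply Rabs_triang|].
    replace (2 * r * (1 / 2) ^ k * (1 - (1 / 2) ^ S n)) with
      (r * ((1 / 2) ^ k * (1 / 2) ^ n) + 2 * r * (1 / 2) ^ k * (1 - (1 / 2) ^ n))
      by (simpl; field).
    lra.
Qed.

Definition picard_lim (t : R) (i : nat) : R := real (Lim_seq (fun k => picard k t i)).

Lemma picard_lim_close k t i : (i < N)%nat ->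
  Rabs (picard_lim t i - picard k t i) <= 2 * r * (1 / 2) ^ k.
Proof.
  intros Hi. apply (Lim_seq_geom_half_close (fun k => picard k t i)).
  intros. now apply picard_cauchy.
Qed.

Lemma picard_lim_admissible : admissible picard_lim.
Proof.
  split.
  - intros t k Hk. apply (le_of_le_geom_half _ _ (2 * r)). intros n.
    pose proof (picard_lim_close n t k Hk). pose proof (proj1 (picard_admissible n) t k Hk).
    pose proof (Rabs_triang (picard_lim t k - picard n t k) (picard n t k - p k)).
    replace (picard_lim t k - picard n t k + (picard n t k - p k)) with
      (picard_lim t k - p k) in * by ring. lra.
  - intros t t' k Hk. apply (le_of_le_geom_half _ _ (4 * r)). intros n.
    pose proof (picard_lim_close n t k Hk). pose proof (picard_lim_close n t' k Hk).
    pose proof (proj2 (picard_admissible n) t t' k Hk).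
    replace (picard_lim t k - picard_lim t' k) with
      ((picard_lim t k - picard n t k) - (picard_lim t' k - picard n t' k)
       + (picard n t k - picard n t' k)) by ring.
    eapply Rle_trans; [apply Rabs_triang|].
    pose proof (Rabs_triang (picard_lim t k - picard n t k) (- (picard_lim t' k - picard n t' k)))
      as Ht.
    rewrite Rabs_Ropp, <- Rminus_def in Ht. lra.
Qed.

Lemma picard_lim_ex_RInt i u v : (i < N)%nat -> ex_RInt (fun s => Fv (picard_lim s) i) u v.
Proof.
  intros. apply ex_RInt_continuous_R. intros.
  apply admissible_Fv_continuous; [apply picard_lim_admissible | auto].
Qed.

Lemma picard_lim_fixpoint t i : (i < N)%nat ->
  picard_lim t i = p i + RInt (fun s => Fv (picard_lim s) i) a (clamp a h t).
Proof.
  intros Hi. pose proof (clamp_range a h t Hh).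
  enough (Habs : Rabs (picard_lim t i
                       - (p i + RInt (fun s => Fv (picard_lim s) i) a (clamp a h t))) <= 0)
    by (apply Rminus_diag_uniq, Rabs_eq_0, Rle_antisym; auto; apply Rabs_pos).
  apply (le_of_le_geom_half _ _ (2 * r)). intros n. rewrite Rplus_0_l.
  set (In := RInt (fun s => Fv (picard n s) i) a (clamp a h t)).
  set (I := RInt (fun s => Fv (picard_lim s) i) a (clamp a h t)).
  assert (Hc : Rabs (picard_lim t i - (p i + In)) <= 2 * r * (1 / 2 * (1 / 2) ^ n))
    by exact (picard_lim_close (S n) t i Hi).
  pose proof (pow_lt (1 / 2) n ltac:(lra)).
  assert (HI : Rabs (In - I) <= 2 * r * (1 / 2) ^ n / 2).
  { apply Rabs_RInt_Fv_sub_le;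
      [apply Rmult_le_pos; lra | auto | apply picard_ex_RInt, Hi | apply picard_lim_ex_RInt, Hi
      | auto |].
    intros s _. split; [apply picard_admissible|].
    split; [apply picard_lim_admissible|]. intros k Hk.
    rewrite Rabs_minus_sym. now apply picard_lim_close. }
  pose proof (Rabs_triang (picard_lim t i - (p i + In)) (In - I)).
  replace (picard_lim t i - (p i + In) + (In - I)) with (picard_lim t i - (p i + I)) in * by ring.
  lra.
Qed.


Lemma picard_lim_is_derive t i : a < t < a + h -> (i < N)%nat ->
  is_derive (fun s => picard_lim s i) t (Fv (picard_lim t) i).
Proof.
  intros Ht Hi.
  pose proof (fun s => admissible_Fv_continuous picard_lim i s picard_lim_admissible Hi) as Hc.
  apply (is_derive_ext_loc (fun s => p i + RInt (fun u => Fv (picard_lim u) i) a s)).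
  { apply (locally_interval _ t (Finite a) (Finite (a + h))); simpl; try lra.
    intros s Has Hsh. rewrite (picard_lim_fixpoint s i Hi), clamp_id by lra. reflexivity. }
  rewrite <- (Rplus_0_l (Fv (picard_lim t) i)).
  apply (is_derive_plus (fun _ => p i)); [apply (is_derive_const (V:=R_NormedModule))|].
  apply (is_derive_RInt (fun u => Fv (picard_lim u) i)
           (RInt (fun u => Fv (picard_lim u) i) a) a); [|apply Hc].
  apply filter_forall. intros u. apply (RInt_correct (V:=R_CompleteNormedModule)).
  now apply picard_lim_ex_RInt.
Qed.

Lemma picard_lim_unique (W : R -> nat -> R) b s i : b <= a + h ->
  (forall u, a <= u <= b -> in_ball N p r (W u) /\
     forall j, (j < N)%nat -> is_RInt (fun v => Fv (W v) j) a u (W u j - p j)) ->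
  a <= s <= b -> (i < N)%nat -> W s i = picard_lim s i.
Proof.
  intros Hb HW Hs Hi.
  assert (Hclose : forall n u j, a <= u <= b -> (j < N)%nat ->
            Rabs (W u j - picard_lim u j) <= 2 * r * (1 / 2) ^ n).
  { induction n as [|n IH]; intros u j Hu Hj.
    - pose proof (proj1 (HW u Hu) j Hj). pose proof (proj1 picard_lim_admissible u j Hj).
      pose proof (Rabs_triang (W u j - p j) (- (picard_lim u j - p j))) as Ht.
      rewrite Rabs_Ropp in Ht. replace (W u j - p j + - (picard_lim u j - p j))
        with (W u j - picard_lim u j) in Ht by ring. simpl. lra.
    - pose proof (pow_lt (1 / 2) n ltac:(lra)).
      assert (HWint := proj2 (HW u Hu) j Hj).
      rewrite (picard_lim_fixpoint u j Hj), clamp_id by lra.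
      replace (W u j) with (p j + RInt (fun v => Fv (W v) j) a u)
        by (rewrite (is_RInt_unique _ _ _ _ HWint); ring).
      replace (p j + RInt (fun v => Fv (W v) j) a u
               - (p j + RInt (fun v => Fv (picard_lim v) j) a u))
        with (RInt (fun v => Fv (W v) j) a u - RInt (fun v => Fv (picard_lim v) j) a u) by ring.
      replace (2 * r * (1 / 2) ^ S n) with (2 * r * (1 / 2) ^ n / 2) by (simpl; field).
      apply Rabs_RInt_Fv_sub_le;
        [apply Rmult_le_pos; lra | lra | eexists; exact HWint | apply picard_lim_ex_RInt, Hj
        | auto |].
      intros v Hv. split; [apply HW; lra|]. split; [apply picard_lim_admissible|].
      intros k Hk. apply IH; auto. lra. }
  apply Rminus_diag_uniq, Rabs_eq_0, Rle_antisym; [|apply Rabs_pos].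
  apply (le_of_le_geom_half _ _ (2 * r)). intros n. rewrite Rplus_0_l. auto.
Qed.

End PicardLindelof.

(** * Continuation and blow-up *)

Lemma in_ball_separated N p r d z : separated N (d + 2 * r) p -> in_ball N p r z ->
  separated N d z.
Proof.
  intros Hp Hz i Hi. specialize (Hp i Hi).
  pose proof (Hz i ltac:(lia)) as A. pose proof (Hz (i + 1)%nat Hi) as B.
  apply Rabs_le_between in A. apply Rabs_le_between in B. lra.
Qed.

Lemma rsum_flow_solution_const N m chi (Z : R -> nat -> R) a b u v :
  (forall t i, a < t < b -> (i < N)%nat ->
     is_derive (fun s => Z s i) t (flow_rhs N m chi (Z t) i)) ->
  a < u < b -> a < v < b -> rsum N (Z u) = rsum N (Z v).
Proof.
  intros HZ Hu Hv.
  assert (Hd : forall w, a < w < b -> is_derive (fun s => rsum N (fun i => Z s i)) w 0).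
  { intros w Hw. rewrite <- (rsum_flow_rhs N m chi (Z w)).
    apply (is_derive_rsum N (fun i s => Z s i)). intros; now apply HZ. }
  destruct (MVT_gen (fun s => rsum N (fun i => Z s i)) u v (fun _ => 0)) as [c [_ Heq]].
  - intros w Hw. apply Hd. pose proof (Rmin_glb_lt _ _ _ (proj1 Hu) (proj1 Hv)).
    pose proof (Rmax_lub_lt _ _ _ (proj2 Hu) (proj2 Hv)). lra.
  - intros w Hw. eapply is_derive_continuity_pt, Hd.
    pose proof (Rmin_glb_lt _ _ _ (proj1 Hu) (proj1 Hv)).
    pose proof (Rmax_lub_lt _ _ _ (proj2 Hu) (proj2 Hv)). lra.
  - change (rsum N (Z v) - rsum N (Z u) = 0 * (v - u)) in Heq. lra.
Qed.

Lemma is_solution_glue N m chi X0 T0 X Z t2 t3 :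
  is_solution N m chi X0 (Finite T0) X -> 0 < t2 < T0 -> T0 < t3 ->
  (forall s i, t2 <= s < T0 -> (i < N)%nat -> X s i = Z s i) ->
  (forall t i, t2 < t < t3 -> (i < N)%nat ->
     is_derive (fun s => Z s i) t (flow_rhs N m chi (Z t) i)) ->
  (forall t, T0 <= t < t3 -> inRN N (Z t)) ->
  is_solution N m chi X0 (Finite t3) (fun t => if Rlt_dec t T0 then X t else Z t).
Proof.
  intros (HT & H0 & HR & Hlim & Hder) Ht2 Ht3 Hagree HZ HZR. simpl in *.
  set (Y t := if Rlt_dec t T0 then X t else Z t).
  assert (HYX : forall t, t < T0 -> Y t = X t)
    by (intros t Ht; unfold Y; destruct (Rlt_dec t T0); [reflexivity | lra]).
  assert (HYZ : forall t, T0 <= t -> Y t = Z t)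
    by (intros t Ht; unfold Y; destruct (Rlt_dec t T0); [lra | reflexivity]).
  split; [simpl; lra|]. split; [intros; rewrite HYX by lra; auto|].
  split; [|split].
  - intros t Ht Ht'. simpl in Ht'. destruct (Rlt_dec t T0).
    + rewrite HYX by auto. auto.
    + rewrite HYZ by lra. apply HZR. lra.
  - intros i Hi. apply (filterlim_ext_loc (fun s => X s i)); [|auto].
    exists (mkposreal T0 HT). intros s Hs _. change (Rabs (s - 0) < T0) in Hs.
    rewrite HYX; [reflexivity|]. apply Rabs_def2 in Hs. lra.
  - intros t i Ht Ht' Hi. simpl in Ht'. destruct (Rlt_dec t T0) as [Hlt|Hge].
    + rewrite HYX by auto. apply (is_derive_ext_loc (fun s => X s i)); [|auto].
      apply (locally_interval _ t m_infty (Finite T0)); simpl; auto.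
      intros s _ Hs. now rewrite HYX.
    + rewrite HYZ by lra. apply (is_derive_ext_loc (fun s => Z s i)); [|apply HZ; auto; lra].
      apply (locally_interval _ t (Finite t2) p_infty); simpl; auto; [lra|].
      intros s Hs _. destruct (Rlt_dec s T0).
      * rewrite HYX by auto. symmetry. apply Hagree; auto; lra.
      * now rewrite HYZ by lra.
Qed.

Section Continuation.

Variables (N : nat) (m chi : R) (X0 : nat -> R) (T0 : R) (X : R -> nat -> R) (delta t1 : R).
Hypotheses (Hm : 0 <= m) (HX : is_solution N m chi X0 (Finite T0) X)
  (Hdelta : 0 < delta) (Ht1 : 0 <= t1 < T0)
  (Hsep : forall t, t1 <= t < T0 -> separated N delta (X t)).

Lemma solution_lipschitz d u v k : 0 < d <= delta -> t1 < u < T0 -> t1 < v < T0 ->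
  (k < N)%nat -> Rabs (X u k - X v k) <= flow_bound N m chi d * Rabs (u - v).
Proof.
  intros Hd Hu Hv Hk. destruct HX as (_ & _ & _ & _ & Hder). simpl in Hder.
  assert (Hin : forall w, Rmin v u <= w <= Rmax v u -> t1 < w < T0).
  { intros w Hw. pose proof (Rmin_glb_lt _ _ _ (proj1 Hv) (proj1 Hu)).
    pose proof (Rmax_lub_lt _ _ _ (proj2 Hv) (proj2 Hu)). lra. }
  destruct (MVT_gen (fun w => X w k) v u (fun w => flow_rhs N m chi (X w) k)) as [c [Hc ->]].
  - intros w Hw. apply Hder; auto; pose proof (Hin w ltac:(lra)); lra.
  - intros w Hw. pose proof (Hin w Hw). eapply is_derive_continuity_pt, Hder; auto; lra.
  - rewrite Rabs_mult. apply Rmult_le_compat_r; [apply Rabs_pos|].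
    pose proof (Hin c Hc). apply Rabs_flow_rhs_le; try lra; auto.
    apply (separated_weaken N delta); [lra | apply Hsep; lra].
Qed.

Lemma flow_along_solution_continuous s i : t1 < s < T0 -> (i < N)%nat ->
  continuous (fun u => flow_rhs N m chi (X u) i) s.
Proof.
  intros Hs Hi. pose proof (flow_bound_nonneg N m chi delta).
  pose proof (flow_lipschitz_nonneg N m chi delta Hm).
  apply (continuous_of_lipschitz_near _ _
           (flow_lipschitz N m chi delta * flow_bound N m chi delta)); [nra|].
  apply (locally_interval _ s (Finite t1) (Finite T0)); simpl; try lra.
  intros u Hu1 Hu2. rewrite Rmult_assoc.
  apply Rabs_flow_rhs_sub_le; auto; try (apply Hsep; lra).
  intros k Hk. apply solution_lipschitz; auto; lra.
Qed.

(* The flow is restarted by Picard iteration at a time [t2] so close to [T0]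
   that the local existence time [h], which only depends on [delta], reaches
   beyond [T0]. *)
Let d := delta / 2.
Let r := delta / 4.
Let K := flow_bound N m chi d.
Let L := flow_lipschitz N m chi d.
Let h := Rmin (r / (K + 1)) (/ (2 * (L + 1))).
Let t2 := Rmax ((t1 + T0) / 2) (T0 - h / 2).
Let p := X t2.
Let Z := picard_lim (flow_rhs N m chi) p t2 h.

Lemma restart_constants : 0 < r /\ 0 <= K /\ 0 <= L /\ 0 < h /\ h * K <= r /\ h * L <= 1 / 2.
Proof.
  assert (Hr : 0 < r) by (unfold r; lra).
  assert (HK : 0 <= K) by apply flow_bound_nonneg.
  assert (HL : 0 <= L) by (apply flow_lipschitz_nonneg; lra).
  assert (Hh1 := Rmin_l (r / (K + 1)) (/ (2 * (L + 1)))).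
  assert (Hh2 := Rmin_r (r / (K + 1)) (/ (2 * (L + 1)))). fold h in Hh1, Hh2.
  repeat split; auto.
  - apply Rmin_pos; [apply Rdiv_lt_0_compat | apply Rinv_0_lt_compat]; lra.
  - apply Rle_trans with (r / (K + 1) * K); [now apply Rmult_le_compat_r|].
    apply Rmult_le_reg_r with (K + 1); [lra|]. field_simplify; nra.
  - apply Rle_trans with (/ (2 * (L + 1)) * L); [now apply Rmult_le_compat_r|].
    apply Rmult_le_reg_r with (2 * (L + 1)); [lra|]. field_simplify; lra.
Qed.

Lemma restart_time : t1 < t2 < T0 /\ T0 < t2 + h.
Proof.
  pose proof restart_constants as (_ & _ & _ & Hh & _).
  unfold t2, Rmax. destruct (Rle_dec ((t1 + T0) / 2) (T0 - h / 2)); lra.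
Qed.

Lemma restart_ball_separated z : in_ball N p r z -> separated N d z.
Proof.
  apply in_ball_separated. replace (d + 2 * r) with delta by (unfold d, r; field).
  apply Hsep. pose proof restart_time. lra.
Qed.

Lemma flow_rhs_bounded_on_ball z : in_ball N p r z ->
  forall i, (i < N)%nat -> Rabs (flow_rhs N m chi z i) <= K.
Proof.
  intros Hz Hi. apply Rabs_flow_rhs_le; auto; [unfold d; lra|]. now apply restart_ball_separated.
Qed.

Lemma flow_rhs_lipschitz_on_ball z w e : in_ball N p r z -> in_ball N p r w ->
  (forall k, (k < N)%nat -> Rabs (z k - w k) <= e) ->
  forall i, (i < N)%nat -> Rabs (flow_rhs N m chi z i - flow_rhs N m chi w i) <= L * e.
Proof.
  intros Hz Hw Hzw i Hi.
  apply Rabs_flow_rhs_sub_le; auto; [unfold d; lra | |]; now apply restart_ball_separated.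
Qed.

Lemma solution_in_restart_ball s : t2 <= s < T0 -> in_ball N p r (X s).
Proof.
  intros Hs k Hk. pose proof restart_time.
  pose proof restart_constants as (Hr & HK & _ & _ & HhK & _).
  unfold p. destruct (Req_dec s t2) as [->|Hne]; [rewrite Rminus_diag, Rabs_R0; lra|].
  eapply Rle_trans; [apply (solution_lipschitz d); unfold d; auto; lra|].
  fold K. rewrite Rabs_pos_eq by lra. nra.
Qed.

Lemma solution_eq_restart s i : t2 <= s < T0 -> (i < N)%nat -> X s i = Z s i.
Proof.
  intros Hs Hi. pose proof restart_time.
  pose proof restart_constants as (Hr & HK & HL & Hh & HhK & HhL).
  apply (picard_lim_unique N (flow_rhs N m chi) p t2 h r K L Hr HK HL Hh HhK HhL
           flow_rhs_bounded_on_ball flow_rhs_lipschitz_on_ball X s); auto; try lra.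
  intros u Hu. split; [apply solution_in_restart_ball; lra|]. intros j Hj.
  pose proof (is_RInt_derive (V:=R_CompleteNormedModule) (fun w => X w j)
                (fun w => flow_rhs N m chi (X w) j) t2 u) as HI.
  rewrite Rmin_left, Rmax_right in HI by lra. apply HI.
  - intros w Hw. destruct HX as (_ & _ & _ & _ & Hder). apply Hder; simpl; auto; lra.
  - intros w Hw. apply flow_along_solution_continuous; auto; lra.
Qed.

Lemma solution_extends :
  exists (T' : Rbar) (Y : R -> nat -> R),
    Rbar_lt (Finite T0) T' /\ is_solution N m chi X0 T' Y /\
    (forall t i, 0 <= t -> Rbar_lt t (Finite T0) -> (i < N)%nat -> Y t i = X t i).
Proof.
  pose proof restart_time.
  pose proof restart_constants as (Hr & HK & HL & Hh & HhK & HhL).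
  assert (HZadm : admissible N p r K Z) by
    exact (picard_lim_admissible N (flow_rhs N m chi) p t2 h r K L Hr HK HL Hh HhK HhL
             flow_rhs_bounded_on_ball flow_rhs_lipschitz_on_ball).
  assert (HZder : forall t i, t2 < t < t2 + h -> (i < N)%nat ->
            is_derive (fun s => Z s i) t (flow_rhs N m chi (Z t) i)) by
    exact (picard_lim_is_derive N (flow_rhs N m chi) p t2 h r K L Hr HK HL Hh HhK HhL
             flow_rhs_bounded_on_ball flow_rhs_lipschitz_on_ball).
  exists (Finite (t2 + h)), (fun t => if Rlt_dec t T0 then X t else Z t).
  split; [simpl; lra|]. split.
  - apply (is_solution_glue N m chi X0 T0 X Z t2); auto; try lra; [apply solution_eq_restart|].
    intros t Ht. split.
    + apply (separated_ordered N d); [unfold d; lra|]. apply restart_ball_separated, HZadm.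
    + set (u0 := (t2 + T0) / 2).
      rewrite (rsum_flow_solution_const N m chi Z t2 (t2 + h) t u0) by (unfold u0; auto; lra).
      destruct HX as (_ & _ & HR & _).
      rewrite <- (proj2 (HR u0 ltac:(unfold u0; lra) ltac:(simpl; unfold u0; lra))).
      apply rsum_ext. intros i Hi. symmetry. apply solution_eq_restart; auto. unfold u0; lra.
  - intros t i _ Ht _. simpl in Ht. destruct (Rlt_dec t T0); [reflexivity | lra].
Qed.

End Continuation.

Lemma is_lim_seq_inv_succ : is_lim_seq (fun n => / (INR n + 1)) 0.
Proof.
  apply (is_lim_seq_inv (fun n => INR n + 1) p_infty); [|discriminate].
  apply (is_lim_seq_ext (fun n => INR (S n))); [intros; apply S_INR|].
  apply (is_lim_seq_incr_1 INR), is_lim_seq_INR.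
Qed.

Lemma inv_succ_pos n : 0 < / (INR n + 1).
Proof. apply Rinv_0_lt_compat. pose proof (pos_INR n). lra. Qed.

Lemma bounded_below_near (g : R -> R) T0 : 0 < T0 -> (forall t, 0 <= t < T0 -> 0 < g t) ->
  ~ (exists tn : nat -> R, (forall n, 0 <= tn n < T0) /\ is_lim_seq tn T0 /\
       is_lim_seq (fun n => g (tn n)) 0) ->
  exists delta t1, 0 < delta /\ 0 <= t1 < T0 /\ forall t, t1 <= t < T0 -> delta <= g t.
Proof.
  intros HT0 Hg Hno. apply NNPP. intros Hn. apply Hno.
  assert (Hex : forall n : nat, exists t, Rmax 0 (T0 - / (INR n + 1)) <= t < T0 /\
                  g t < / (INR n + 1)).
  { intros n. apply NNPP. intros Hc. apply Hn.
    exists (/ (INR n + 1)), (Rmax 0 (T0 - / (INR n + 1))).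
    split; [apply inv_succ_pos|]. split.
    - split; [apply Rmax_l|]. apply Rmax_lub_lt; [lra|]. pose proof (inv_succ_pos n). lra.
    - intros t Ht. apply Rnot_lt_le. intros Hlt. apply Hc. now exists t. }
  destruct (choice _ Hex) as [tn Htn].
  exists tn. assert (Hrange : forall n, 0 <= tn n < T0).
  { intros n. destruct (Htn n) as [[H1 H2] _]. pose proof (Rmax_l 0 (T0 - / (INR n + 1))). lra. }
  split; [auto|]. split.
  - apply (is_lim_seq_le_le (fun n => T0 - / (INR n + 1)) _ (fun _ => T0)).
    + intros n. destruct (Htn n) as [[H1 H2] _].
      pose proof (Rmax_r 0 (T0 - / (INR n + 1))). lra.
    + replace (Finite T0) with (Finite (T0 - 0)) by (f_equal; ring).
      apply is_lim_seq_minus'; [apply is_lim_seq_const | apply is_lim_seq_inv_succ].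
    + apply is_lim_seq_const.
  - apply (is_lim_seq_le_le (fun _ => 0) _ (fun n => / (INR n + 1))).
    + intros n. destruct (Htn n) as [_ H]. pose proof (Hg (tn n) (Hrange n)). lra.
    + apply is_lim_seq_const.
    + apply is_lim_seq_inv_succ.
Qed.

Lemma no_blow_up_separated N T0 (X : R -> nat -> R) : 0 < T0 ->
  (forall t, 0 <= t < T0 -> inRN N (X t)) -> ~ blows_up_finite_time N (Finite T0) X ->
  forall k, (k <= N - 1)%nat -> exists delta t1, 0 < delta /\ 0 <= t1 < T0 /\
    forall t, t1 <= t < T0 -> forall i, (i < k)%nat -> delta <= X t (i + 1)%nat - X t i.
Proof.
  intros HT0 HR Hnb. induction k as [|k IH]; intros Hk.
  - exists 1, 0. repeat split; lra || lia.
  - destruct (IH ltac:(lia)) as (d1 & s1 & Hd1 & Hs1 & H1).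
    destruct (bounded_below_near (fun t => X t (k + 1)%nat - X t k) T0 HT0)
      as (d2 & s2 & Hd2 & Hs2 & H2).
    { intros t Ht. pose proof (proj1 (HR t Ht) k ltac:(lia)). lra. }
    { intros (tn & Htn & Hlim & Hgap). apply Hnb. exists T0. split; [reflexivity|].
      exists k, tn. repeat split; auto; try lia; apply Htn. }
    exists (Rmin d1 d2), (Rmax s1 s2). split; [now apply Rmin_pos|]. split.
    { split; [pose proof (Rmax_l s1 s2); lra | now apply Rmax_lub_lt]. }
    intros t Ht i Hi. pose proof (Rmax_l s1 s2). pose proof (Rmax_r s1 s2).
    pose proof (Rmin_l d1 d2). pose proof (Rmin_r d1 d2).
    destruct (Nat.eq_dec i k) as [->|Hne].
    + specialize (H2 t ltac:(lra)). simpl in H2. lra.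
    + specialize (H1 t ltac:(lra) i ltac:(lia)). lra.
Qed.

Theorem proposition4p4 (m chi : R) (N : nat) (CN : R) (X0 : nat -> R)
  (T : Rbar) (X : R -> nat -> R) :
  1 < m -> (2 <= N)%nat -> is_CN N m CN -> chi > CN ->
  inRN N X0 -> FNm N m chi X0 < 0 ->
  is_maximal_solution N m chi X0 T X ->
  blows_up_finite_time N T X.
Proof.
  intros Hm _ _ _ HX0 HF [Hsol Hmax].
  destruct (solution_time_finite N m chi X0 T X Hm Hsol (proj1 HX0) HF) as [T0 ->].
  assert (HT0 : 0 < T0) by apply Hsol.
  assert (HR : forall t, 0 <= t < T0 -> inRN N (X t)) by (intros t Ht; apply Hsol; simpl; lra).
  apply NNPP. intros Hnb. apply Hmax.
  destruct (no_blow_up_separated N T0 X HT0 HR Hnb (N - 1) (le_n _))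
    as (delta & t1 & Hdelta & Ht1 & Hsep).
  apply (solution_extends N m chi X0 T0 X delta t1); auto; [lra|].
  intros t Ht i Hi. apply Hsep; auto. lia.
Qed.
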